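(* Let $\Sigma=\{0,1\}$. For any $D\in\mathbb N_+$ there exists $\mathcal F\subseteq\Sigma^{\Sigma^*}$ such that $\mathrm{Ldim}(\mathcal F)=D$ and $\mathrm{VCdim}(\mathcal F)=1$ over the domain $\Sigma^*$, and $\mathrm{VCdim}(\mathcal F^{\mathrm{e2e}(T)})=D$ for every $T>D$, even over the domain $\Sigma^n$ with $n=\lceil\log_2 D\rceil+1$.
   Context: For $f:\Sigma^*\to\Sigma$, $\bar f(\mathbf x)$ is $\mathbf x$ with $f(\mathbf x)$ appended; $f^{\mathrm{CoT}(T)}=\bar f^{\circ T}$; $f^{\mathrm{e2e}(T)}(\mathbf x)$ is the last token of $f^{\mathrm{CoT}(T)}(\mathbf x)$; $\mathcal F^{\mathrm{e2e}(T)}=\{f^{\mathrm{e2e}(T)}:f\in\mathcal F\}$. $\mathrm{VCdim}$ is the VC dimension. Littlestone dimension $\mathrm{Ldim}(\mathcal F)$: the largest depth $d$ of a complete binary tree with nodes labeled by elements of $\Sigma^*$ such that for every root-to-leaf path $\epsilon\in\{0,1\}^d$ some $f\in\mathcal F$ satisfies $f(\text{$i$-th node on the path})=\epsilon_i$ for all $i\in[d]$ (with $\epsilon_i=1$ meaning the path turns right). *)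

From mathcomp Require Import all_boot.
Set Implicit Arguments. Unset Strict Implicit. Unset Printing Implicit Defensive.

Definition word := seq bool.

Definition hclass := (word -> bool) -> Prop.

Definition fbar (f : word -> bool) (x : word) : word := rcons x (f x).

Definition cot (f : word -> bool) (T : nat) (x : word) : word := iter T (fbar f) x.

(* f^{e2e(T)}(x) = last token of f^{CoT(T)}(x)
   (the default [false] is only used when T = 0 and x is empty). *)
Definition e2e (f : word -> bool) (T : nat) (x : word) : bool :=
  last false (cot f T x).

Definition e2e_class (F : hclass) (T : nat) : hclass :=
  fun g => exists f, F f /\ g = e2e f T.

Definition shatters (X : word -> Prop) (F : hclass) (S : seq word) : Prop :=
  uniq S /\ (forall x, x \in S -> X x) /\
  forall lab : word -> bool, exists f, F f /\ forall x, x \in S -> f x = lab x.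

Definition VCdim_eq (X : word -> Prop) (F : hclass) (d : nat) : Prop :=
  (exists S, shatters X F S /\ size S = d) /\
  (forall S, shatters X F S -> size S <= d).

(* A complete binary tree of depth d with nodes labeled by words is encoded as
   a map t from paths (the sequence of turns from the root, of length < d) to
   node labels.  It is shattered by F if for every root-to-leaf path
   eps in {0,1}^d some f in F satisfies f(i-th node on the path) = eps_i
   (eps_i = true meaning the path turns right). *)
Definition tree_shattered (F : hclass) (d : nat) (t : seq bool -> word) : Prop :=
  forall eps : seq bool, size eps = d ->
    exists f, F f /\ forall i, i < d -> f (t (take i eps)) = nth false eps i.

Definition Ldim_eq (F : hclass) (d : nat) : Prop :=
  (exists t, tree_shattered F d t) /\
  (forall d' t, tree_shattered F d' t -> d' <= d).

From mathcomp Require Import all_boot.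
From mathcomp Require Import zify.
From Stdlib Require Import ClassicalEpsilon.

Set Implicit Arguments.
Unset Strict Implicit.

(* Each hypothesis [hyp e], e in {0,1}^D, is a threshold [w |-> code w <= bin e]
   of one fixed code, where [bin] reads a word as a binary number, most
   significant bit first.  Thresholds of a single function never shatter two
   points, so the class has VC dimension 1; having only 2^D members, it has
   Littlestone dimension at most D, and so does the VC dimension of its e2e
   class.  On a word x ++ p with |x| = n and p a proper prefix of e, the code
   is bin (p ++ 1 ++ 0...0), which is <= bin e exactly when the next bit of e
   is 1: so [hyp e] outputs the next bit of e, which yields a shattered tree of
   depth D and makes the chain of thought started at any x in {0,1}^n write
   out all of e.  Once e is written, [hyp e] outputs the bit of e at position
   bin x, so the e2e class shatters D words of {0,1}^n. *)

Fixpoint bin (s : seq bool) : nat :=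
  if s is b :: s' then b * 2 ^ size s' + bin s' else 0.

Fixpoint bits (n j : nat) : seq bool :=
  if n is n'.+1 then
    if 2 ^ n' <= j then true :: bits n' (j - 2 ^ n') else false :: bits n' j
  else [::].

Lemma bin_cat s1 s2 : bin (s1 ++ s2) = bin s1 * 2 ^ size s2 + bin s2.
Proof.
elim: s1 => [|b s1 IH] //=; rewrite IH size_cat expnD; case: b => /=; lia.
Qed.

Lemma bin_lt s : bin s < 2 ^ size s.
Proof. by elim: s => [|b s IH] //=; rewrite expnS; case: b => /=; lia. Qed.

Lemma bin_nseq_false m : bin (nseq m false) = 0.
Proof. by elim: m. Qed.

Lemma size_bits n j : size (bits n j) = n.
Proof. by elim: n j => [|n IH] j //=; case: leqP => _ /=; rewrite IH. Qed.

Lemma bitsK n j : j < 2 ^ n -> bin (bits n j) = j.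
Proof.
elim: n j => [|n IH] j /=; first by case: j.
by rewrite expnS => lt_j; case: leqP => le_j /=; rewrite size_bits IH; lia.
Qed.

Lemma bin_prefix_leqE e k : k < size e ->
  (bin (take k e ++ true :: nseq (size e - k.+1) false) <= bin e) = nth false e k.
Proof.
move=> lt_ke; rewrite -[X in _ <= bin X](cat_take_drop k e) (drop_nth false) //.
rewrite !bin_cat /= size_nseq size_drop bin_nseq_false.
have := bin_lt (drop k.+1 e); rewrite size_drop.
by case: (nth false e k) => /=; lia.
Qed.

Lemma cotD f k m x : cot f (k + m) x = cot f k (cot f m x).
Proof. exact: iterD. Qed.

Lemma cot_extends f k x : exists s, cot f k x = x ++ s.
Proof.
elim: k => [|k [s IH]]; first by exists [::]; rewrite cats0.
by exists (rcons s (f (x ++ s))); rewrite /cot iterS -/(cot f k x) IH /fbar rcons_cat.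
Qed.

Lemma e2eS f k x : e2e f k.+1 x = f (cot f k x).
Proof. by rewrite /e2e /cot iterS /fbar last_rcons. Qed.

Lemma shatters_domainW (X Y : word -> Prop) F S :
  (forall x, X x -> Y x) -> shatters X F S -> shatters Y F S.
Proof. by move=> sub_XY [uS [SX shS]]; split; last split=> // x /SX /sub_XY. Qed.

Lemma shatters_tree X F S :
  shatters X F S -> tree_shattered F (size S) (fun p => nth [::] S (size p)).
Proof.
move=> [uS [_ shS]] e size_e.
have [f [Ff fS]] := shS (fun w => nth false e (index w S)).
exists f; split=> // i lt_iS.
by rewrite size_takel ?size_e 1?ltnW // fS ?mem_nth // index_uniq.
Qed.

Lemma tree_shattered_card (I : finType) (g : I -> word -> bool) F d t :
  (forall f, F f -> exists i, f = g i) -> tree_shattered F d t -> 2 ^ d <= #|I|.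
Proof.
move=> sub_Fg tsh.
have realize (e : d.-tuple bool) :
    {i | forall k, k < d -> g i (t (take k e)) = nth false e k}.
  apply: constructive_indefinite_description.
  by have [f [/sub_Fg [i ->] fe]] := tsh e (size_tuple e); exists i.
pose h e := sval (realize e).
suff inj_h : injective h.
  by have := leq_card h inj_h; rewrite card_tuple card_bool.
move=> e1 e2 eq_h; apply: val_inj => /=.
have eq_take k : k <= d -> take k e1 = take k e2.
  elim: k => [|k IH] lt_kd; first by rewrite !take0.
  have IHk := IH (ltnW lt_kd).
  rewrite !(take_nth false) ?size_tuple // IHk; congr rcons.
  rewrite -(svalP (realize e1) k lt_kd) -(svalP (realize e2) k lt_kd) IHk.
  by rewrite -/(h e1) -/(h e2) eq_h.
by have := eq_take d (leqnn d); rewrite !take_oversize ?size_tuple.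
Qed.

Lemma shatters_card (I : finType) (g : I -> word -> bool) X F S :
  (forall f, F f -> exists i, f = g i) -> shatters X F S -> 2 ^ size S <= #|I|.
Proof. by move=> sub_Fg /shatters_tree; apply: tree_shattered_card sub_Fg. Qed.

Lemma leq_exp2_card_tuple d D : (2 ^ d <= #|{: D.-tuple bool}|) = (d <= D).
Proof. by rewrite card_tuple card_bool leq_exp2l. Qed.

Lemma shatters_threshold (c : word -> nat) X F S :
  (forall f, F f -> exists k, f = fun w => c w <= k) ->
  shatters X F S -> size S <= 1.
Proof.
move=> thrF [uS [_ shS]]; rewrite leqNgt; apply/negP => S_gt1.
have separate x y : x \in S -> y \in S -> x != y -> c y < c x.
  move=> xS yS neq_xy; have [f [/thrF [k ->] fS]] := shS (pred1 y).
  have := fS x xS; have := fS y yS; rewrite /= eqxx (negbTE neq_xy).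
  by move=> le_cy /negbT; rewrite -ltnNge; apply: leq_ltn_trans.
have x0S : nth [::] S 0 \in S by rewrite mem_nth // ltnW.
have x1S : nth [::] S 1 \in S by rewrite mem_nth.
have neq01 : nth [::] S 0 != nth [::] S 1 by rewrite nth_uniq // ltnW.
have := separate _ _ x0S x1S neq01.
by have := separate _ _ x1S x0S; rewrite eq_sym neq01 => /(_ isT); lia.
Qed.

Section ChainOfThoughtClass.

Variables D n : nat.

(* Once D bits follow the prefix x, the code is 0 or 2 ^ D > bin e, so every
   threshold answers with the bit at position [bin x] of the suffix. *)
Definition code (w : word) : nat :=
  let p := drop n w in
  if size p < D then bin (p ++ true :: nseq (D - (size p).+1) false)
  else if nth false p (bin (take n w)) then 0 else 2 ^ D.

Definition hyp (e : seq bool) (w : word) : bool := code w <= bin e.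

Definition cot_class : hclass := fun f => exists e : D.-tuple bool, f = hyp e.

Lemma hyp_prefix e w k : size e = D -> k < D -> drop n w = take k e ->
  hyp e w = nth false e k.
Proof.
move=> size_e lt_kD p_w; rewrite /hyp /code p_w size_take size_e lt_kD lt_kD.
by rewrite -size_e bin_prefix_leqE ?size_e.
Qed.

Lemma hyp_answer e x s : size e = D -> size x = n -> bin x < D ->
  hyp e (x ++ e ++ s) = nth false e (bin x).
Proof.
move=> size_e size_x lt_xD; rewrite /hyp /code drop_size_cat // take_size_cat //.
rewrite size_cat size_e ltnNge leq_addr /= nth_cat size_e lt_xD.
case: (nth false e (bin x)) => //.
by have := bin_lt e; rewrite size_e; lia.
Qed.

Lemma cot_hyp_prefix e x k : size e = D -> size x = n -> k <= D ->
  cot (hyp e) k x = x ++ take k e.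
Proof.
move=> size_e size_x; elim: k => [|k IH] le_kD; first by rewrite take0 cats0.
rewrite /cot iterS -/(cot _ k x) IH 1?ltnW // /fbar (@hyp_prefix _ _ k) //.
  by rewrite rcons_cat -take_nth // size_e.
by rewrite drop_size_cat.
Qed.

Lemma e2e_hyp e x T : size e = D -> size x = n -> bin x < D -> D < T ->
  e2e (hyp e) T x = nth false e (bin x).
Proof.
move=> size_e size_x lt_xD lt_DT.
have -> : T = ((T - D.+1) + D).+1 by lia.
have take_e : take D e = e by rewrite -size_e take_size.
rewrite e2eS cotD [cot _ D x]cot_hyp_prefix // take_e.
by have [s ->] := cot_extends (hyp e) (T - D.+1) (x ++ e); rewrite -catA hyp_answer.
Qed.

Lemma cot_class_tree : tree_shattered cot_class D (fun p => nseq n false ++ p).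
Proof.
move=> e size_e; exists (hyp e); split; first by exists (Tuple (introT eqP size_e)).
by move=> i lt_iD; apply: hyp_prefix; rewrite // drop_size_cat ?size_nseq.
Qed.

Lemma cot_class_shatters_nil : 0 < D -> shatters (fun _ => True) cot_class [:: [::]].
Proof.
move=> D_gt0; split=> //; split=> // lab.
exists (hyp (nseq D (lab [::]))); split; first by exists [tuple of nseq D (lab [::])].
move=> x; rewrite inE => /eqP ->.
by rewrite (@hyp_prefix _ [::] 0) ?size_nseq ?nth_nseq ?D_gt0 ?take0.
Qed.

Lemma e2e_cot_class_shatters_bits T : D < T -> D <= 2 ^ n ->
  shatters (fun x => size x = n) (e2e_class cot_class T) (mkseq (bits n) D).
Proof.
move=> lt_DT le_D2n; have lt_j2n j : j < D -> j < 2 ^ n by move=> lt_jD; apply: leq_trans lt_jD le_D2n.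
split.
  rewrite map_inj_in_uniq ?iota_uniq // => i j; rewrite !mem_iota !add0n.
  move=> /andP [_ lt_iD] /andP [_ lt_jD] eq_ij.
  by rewrite -(bitsK (lt_j2n i lt_iD)) eq_ij bitsK ?lt_j2n.
split; first by move=> x /mapP [j _ ->]; rewrite size_bits.
move=> lab; pose e := mkseq (fun j => lab (bits n j)) D.
exists (e2e (hyp e) T); split; first by exists (hyp e); split=> //; exists [tuple of e].
move=> x /mapP [j]; rewrite mem_iota => /andP [_ lt_jD] ->.
by rewrite e2e_hyp ?size_mkseq ?size_bits ?bitsK ?lt_j2n // nth_mkseq.
Qed.

Lemma e2e_cot_class_sub T f :
  e2e_class cot_class T f -> exists e : D.-tuple bool, f = e2e (hyp e) T.
Proof. by move=> [_ [[e ->] ->]]; exists e. Qed.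

Lemma cot_class_Ldim : Ldim_eq cot_class D.
Proof.
split; first by exists (fun p => nseq n false ++ p); apply: cot_class_tree.
have sub_hyp f : cot_class f -> exists e : D.-tuple bool, f = hyp e by [].
by move=> d t /(tree_shattered_card sub_hyp); rewrite leq_exp2_card_tuple.
Qed.

Lemma cot_class_VCdim : 0 < D -> VCdim_eq (fun _ => True) cot_class 1.
Proof.
move=> D_gt0; split; first by exists [:: [::]]; split; first exact: cot_class_shatters_nil.
by move=> S; apply: (shatters_threshold (c := code)) => f [e ->]; exists (bin e).
Qed.

Lemma e2e_cot_class_VCdim T (X : word -> Prop) : D < T -> D <= 2 ^ n ->
  (forall x, size x = n -> X x) -> VCdim_eq X (e2e_class cot_class T) D.
Proof.
move=> lt_DT le_D2n sub_X; split.
  exists (mkseq (bits n) D); rewrite size_mkseq; split=> //.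
  exact: shatters_domainW (e2e_cot_class_shatters_bits lt_DT le_D2n).
move=> S /(shatters_card (@e2e_cot_class_sub T)).
by rewrite leq_exp2_card_tuple.
Qed.

End ChainOfThoughtClass.

Theorem theoremE3 (D : nat) (hD : 0 < D) :
  exists F : hclass,
    Ldim_eq F D /\
    VCdim_eq (fun _ => True) F 1 /\
    forall T : nat, D < T ->
      VCdim_eq (fun _ => True) (e2e_class F T) D /\
      VCdim_eq (fun x => size x = (up_log 2 D).+1) (e2e_class F T) D.
Proof.
set n := (up_log 2 D).+1.
have le_D2n : D <= 2 ^ n.
  by rewrite (leq_trans (up_logP D (isT : 1 < 2))) // leq_exp2l.
exists (cot_class D n); split; first exact: cot_class_Ldim.
split; first exact: cot_class_VCdim.
by move=> T lt_DT; split; apply: e2e_cot_class_VCdim.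
Qed.
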